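(* Let $d=2^n$ and let $\mathcal{C}_i$ and $\mathcal{C}_j$ ($i\neq j$) be two disjoint maximal commuting classes of $n$-qubit Pauli operators. Then every operator $U\in\mathcal{C}_i$ commutes with exactly $2^{n-1}-1$ elements of $\mathcal{C}_j$, and this set of $2^{n-1}-1$ elements is unique to $U$: no two distinct elements of $\mathcal{C}_i$ commute with the same set of $2^{n-1}-1$ operators of $\mathcal{C}_j$.
   Context: The $n$-qubit Pauli operators are the $4^n$ tensor products $P_1\otimes\cdots\otimes P_n$ with $P_k\in\{I,X,Y,Z\}$; products are taken up to a phase. A maximal commuting class is a set of $2^n-1$ mutually commuting non-identity $n$-qubit Pauli operators; together with the identity it forms (up to phases) an abelian group generated by $n$ of its elements. *)

From HB Require Import structures.
From mathcomp Require Import all_boot.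
Set Implicit Arguments. Unset Strict Implicit. Unset Printing Implicit Defensive.

(* Single-qubit Pauli operators (up to phase). *)
Inductive pauli1 := PI | PX | PY | PZ.

Definition pauli1_code (p : pauli1) : bool * bool :=
  match p with PI => (false, false) | PX => (true, false)
             | PY => (true, true) | PZ => (false, true) end.
Definition pauli1_decode (c : bool * bool) : pauli1 :=
  match c with (false, false) => PI | (true, false) => PX
             | (true, true) => PY | (false, true) => PZ end.
Lemma pauli1_codeK : cancel pauli1_code pauli1_decode.
Proof. by case. Qed.

HB.instance Definition _ := Equality.copy pauli1 (can_type pauli1_codeK).
HB.instance Definition _ := Choice.copy pauli1 (can_type pauli1_codeK).
HB.instance Definition _ := Countable.copy pauli1 (can_type pauli1_codeK).
HB.instance Definition _ := Finite.copy pauli1 (can_type pauli1_codeK).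

Definition pauli (n : nat) := {ffun 'I_n -> pauli1}.

Definition pauli_id (n : nat) : pauli n := [ffun => PI].

(* Two single-qubit Pauli matrices commute iff one is I or they are equal;
   otherwise they anticommute. *)
Definition commute1 (p q : pauli1) : bool := [|| p == PI, q == PI | p == q].

(* Tensor products of Pauli matrices commute iff they anticommute on an
   even number of tensor factors. *)
Definition pauli_commute (n : nat) (P Q : pauli n) : bool :=
  ~~ odd #|[set k : 'I_n | ~~ commute1 (P k) (Q k)]|.

Definition max_commuting_class (n : nat) (C : {set pauli n}) : Prop :=
  [/\ #|C| = (2 ^ n - 1)%N,
      pauli_id n \notin C &
      {in C &, forall P Q, pauli_commute P Q}].

(* Writing a Pauli operator as a binary vector of length 2n, the product of
   operators (up to phase) is vector addition over GF(2), and "P anticommutes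
   with Q" is a nondegenerate alternating bilinear form.  For a subspace S
   that contains some element anticommuting with a given V, multiplication by
   that element swaps the elements of S commuting and anticommuting with V, so
   exactly half of S commutes with V.  Double counting then gives
   |S| * |S^perp| = 4^n, hence every set of mutually commuting operators has at
   most 2^n elements.  Consequently a maximal commuting class C together with
   the identity is a subspace, and every operator commuting with all of C lies
   in it.  An operator U outside C u {I} therefore anticommutes with some
   element of C, so it commutes with exactly half of the 2^n elements of
   C u {I}, that is with 2^(n-1) - 1 elements of C.  If U, U' in C_i commuted
   with the same elements of C_j, their product would commute with all of
   C_j, hence lie in C_j u {I}; but it lies in C_i u {I}, which meets
   C_j u {I} only in I, so U = U'. *)
From HB Require Import structures.
From mathcomp Require Import all_boot zify.
Set Implicit Arguments. Unset Strict Implicit. Unset Printing Implicit Defensive.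

Definition pauli1_mul (p q : pauli1) : pauli1 :=
  let (a, b) := pauli1_code p in let (c, d) := pauli1_code q in
  pauli1_decode (a (+) c, b (+) d).

Lemma anticommute1_mull p q r :
  ~~ commute1 (pauli1_mul p q) r = ~~ commute1 p r (+) ~~ commute1 q r.
Proof. by case: p; case: q; case: r. Qed.

Lemma commute1C p q : commute1 p q = commute1 q p.
Proof. by case: p; case: q. Qed.

Lemma commute1Il p : commute1 PI p. Proof. by case: p. Qed.
Lemma commute1xx p : commute1 p p. Proof. by case: p. Qed.

Lemma pauli1_mulC p q : pauli1_mul p q = pauli1_mul q p.
Proof. by case: p; case: q. Qed.
Lemma pauli1_mulK p q : pauli1_mul (pauli1_mul p q) q = p.
Proof. by case: p; case: q. Qed.
Lemma pauli1_mulI p : pauli1_mul p PI = p. Proof. by case: p. Qed.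
Lemma pauli1_mulxx p : pauli1_mul p p = PI. Proof. by case: p. Qed.

Lemma card_set_nat (T : finType) (p : pred T) : #|[set k | p k]| = \sum_k p k.
Proof. by rewrite -sum1_card big_mkcond; apply: eq_bigr => k _; rewrite inE. Qed.

Lemma odd_card_addb (T : finType) (a b : pred T) :
  odd #|[set k | a k (+) b k]| = odd #|[set k | a k]| (+) odd #|[set k | b k]|.
Proof.
rewrite !card_set_nat -oddD.
have -> : \sum_k a k + \sum_k b k = \sum_k (a k (+) b k) + (\sum_k (a k && b k)).*2.
  rewrite -muln2 big_distrl -!big_split.
  by apply: eq_bigr => k _; case: (a k); case: (b k).
by rewrite oddD odd_double addbF.
Qed.

Section PauliGroup.
Variable n : nat.
Local Notation pauli := (pauli n).
Local Notation I := (pauli_id n).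
Implicit Types (A B X V : pauli) (S G : {set pauli}).

Definition pauli_mul A B : pauli := [ffun k => pauli1_mul (A k) (B k)].

Definition anticommute A B : bool :=
  odd #|[set k : 'I_n | ~~ commute1 (A k) (B k)]|.

Lemma pauli_commuteE A B : pauli_commute A B = ~~ anticommute A B.
Proof. by []. Qed.

Lemma anticommuteMl A B X :
  anticommute (pauli_mul A B) X = anticommute A X (+) anticommute B X.
Proof.
rewrite /anticommute -odd_card_addb; congr odd; apply: eq_card => k.
by rewrite !inE ffunE anticommute1_mull.
Qed.

Lemma anticommuteC A B : anticommute A B = anticommute B A.
Proof. by rewrite /anticommute; congr odd; apply: eq_card => k; rewrite !inE commute1C. Qed.

Lemma anticommute1l A : anticommute I A = false.
Proof.
by rewrite /anticommute (eq_card (B := pred0)) ?card0 // => k; rewrite !inE ffunE commute1Il.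
Qed.

Lemma anticommutexx A : anticommute A A = false.
Proof.
by rewrite /anticommute (eq_card (B := pred0)) ?card0 // => k; rewrite !inE commute1xx.
Qed.

Lemma pauli_mulK B : involutive (pauli_mul^~ B).
Proof. by move=> A; apply/ffunP => k; rewrite !ffunE pauli1_mulK. Qed.

Lemma pauli_mulxx A : pauli_mul A A = I.
Proof. by apply/ffunP => k; rewrite !ffunE pauli1_mulxx. Qed.

Lemma pauli_mul1 A : pauli_mul A I = A.
Proof. by apply/ffunP => k; rewrite !ffunE pauli1_mulI. Qed.

Lemma pauli_mulC A B : pauli_mul A B = pauli_mul B A.
Proof. by apply/ffunP => k; rewrite !ffunE pauli1_mulC. Qed.

Lemma pauli_mul_eq1 A B : (pauli_mul A B == I) = (A == B).
Proof.
apply/eqP/eqP => [AB | ->]; last exact: pauli_mulxx.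
by rewrite -(pauli_mulK B A) AB pauli_mulC pauli_mul1.
Qed.

Lemma card_pauli : #|{: pauli}| = 2 ^ n * 2 ^ n.
Proof.
have codeK : cancel pauli1_decode pauli1_code by case=> [[] []].
rewrite card_ffun card_ord -expnMn.
by rewrite (bij_eq_card (Bijective pauli1_codeK codeK)) card_prod card_bool.
Qed.

Lemma anticommute_witness A : A != I -> exists B, anticommute A B.
Proof.
move=> A1; have [k Ak] : exists k, A k != PI.
  apply/existsP; apply: contraR A1; rewrite negb_exists => /forallP A1.
  by apply/eqP/ffunP => k; rewrite ffunE; apply/eqP/negPn.
pose q := if A k == PX then PZ else PX.
exists [ffun j => if j == k then q else PI].
rewrite /anticommute (eq_card (B := pred1 k)) ?card1 // => j; rewrite !inE ffunE.
have [->|_] := eqVneq j k; last by rewrite commute1C commute1Il.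
by rewrite /q; case: (A k) Ak.
Qed.

Definition mul_closed G := {in G &, forall A B, pauli_mul A B \in G}.

Lemma card_commuting_in_closed G A V : mul_closed G -> A \in G ->
  anticommute A V -> #|[set B in G | ~~ anticommute B V]|.*2 = #|G|.
Proof.
move=> mulG AG AV.
set C := [set B in G | ~~ anticommute B V].
rewrite -(cardsID [set B | anticommute B V] G) -addnn.
have -> : G :\: [set B | anticommute B V] = C.
  by apply/setP => B; rewrite !inE andbC.
have -> : G :&: [set B | anticommute B V] = pauli_mul^~ A @: C.
  rewrite (can2_imset_pre _ (pauli_mulK A) (pauli_mulK A)).
  apply/setP => B; rewrite !inE anticommuteMl AV addbT negbK.
  have [BG|BnG] := boolP (B \in G); first by rewrite mulG.
  by apply/esym/andP => -[/(mulG _ _ ^~ AG)]; rewrite pauli_mulK (negbTE BnG).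
by rewrite card_imset //; apply: can_inj (pauli_mulK A).
Qed.

Lemma card_commuting A : A != I -> #|[set V | ~~ anticommute A V]|.*2 = #|{: pauli}|.
Proof.
move=> A1; have [B AB] := anticommute_witness A1.
have mulT : mul_closed setT by move=> *; rewrite in_setT.
rewrite -cardsT -(@card_commuting_in_closed _ B A mulT (in_setT B)); last by rewrite anticommuteC.
by congr double; apply: eq_card => V; rewrite !inE anticommuteC.
Qed.

Definition perp S := [set V | [forall A in S, ~~ anticommute A V]].

Lemma card_perp S : mul_closed S -> I \in S -> #|perp S| * #|S| = #|{: pauli}|.
Proof.
move=> mulS S1; set N := #|{: pauli}|.
pose pairs := \sum_(A in S) \sum_V ~~ anticommute A V.
have rows : pairs.*2 = #|S| * N + N.
  rewrite -muln2 big_distrl /=.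
  rewrite (eq_bigr (fun A => N + (A == I) * N)); last first.
    move=> A _; rewrite muln2 -card_set_nat; have [->|A1] := eqVneq A I.
      by rewrite (eq_card (B := predT)) ?mul1n ?addnn // => V; rewrite inE anticommute1l.
    by rewrite mul0n addn0 card_commuting.
  rewrite big_split /= sum_nat_const (bigD1 I) //= eqxx mul1n big1 ?addn0 //.
  by move=> A /andP[_ /negbTE ->].
have cols : pairs.*2 = N * #|S| + #|perp S| * #|S|.
  rewrite /pairs exchange_big -muln2 big_distrl /=.
  rewrite (eq_bigr (fun V => #|S| + (V \in perp S) * #|S|)); last first.
    move=> V _; have [VS|VS] := boolP (V \in perp S).
      rewrite mul1n muln2 addnn -sum1_card; congr _.*2; apply: eq_bigr => A AS.
      by move: VS; rewrite inE => /forall_inP/(_ A AS) ->.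
    rewrite mul0n addn0 muln2.
    have [A AS AV] : exists2 A, A \in S & anticommute A V.
      by move: VS; rewrite inE negb_forall_in => /exists_inP[A AS /negPn]; exists A.
    rewrite -(card_commuting_in_closed mulS AS AV) -sum1_card; congr double.
    rewrite big_mkcond [RHS]big_mkcond; apply: eq_bigr => B _.
    by rewrite inE; case: (B \in S); case: (anticommute B V).
  rewrite big_split /= sum_nat_const -big_distrl /= -card_set_nat.
  by congr (_ * _ + _ * _); apply: eq_card => V; rewrite inE.
by move: rows cols => ->; lia.
Qed.

Definition isotropic S := [forall A in S, forall B in S, ~~ anticommute A B].

Lemma isotropicP S : reflect {in S &, forall A B, ~~ anticommute A B} (isotropic S).
Proof.
apply: (iffP forall_inP) => [iS A B AS BS | iS A AS].
  exact: forall_inP (iS A AS) B BS.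
by apply/forall_inP => B; apply: iS.
Qed.

Lemma isotropicU1 X S : isotropic S -> {in S, forall A, ~~ anticommute X A} ->
  isotropic (X |: S).
Proof.
move=> /isotropicP iS XS; apply/isotropicP => A B.
case/setU1P=> [->|AS]; case/setU1P=> [->|BS].
- by rewrite anticommutexx.
- exact: XS.
- by rewrite anticommuteC XS.
- exact: iS.
Qed.

(* A largest isotropic set is a subspace contained in its own perp. *)
Lemma card_isotropic S : isotropic S -> #|S| <= 2 ^ n.
Proof.
move=> iS; have iso0 : isotropic set0 by apply/isotropicP => A B; rewrite inE.
have [M isoM maxM] := arg_maxnP (fun M : {set pauli} => #|M|) iso0.
have grow X : isotropic (X |: M) -> X \in M.
  by move/maxM; rewrite cardsU1; case: (X \in M) => //=; lia.
have M1 : I \in M by apply/grow/isotropicU1 => // A _; rewrite anticommute1l.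
have mulM : mul_closed M.
  have /isotropicP iM := isoM; move=> A B AM BM; apply/grow/isotropicU1 => // C CM.
  by rewrite anticommuteMl (negbTE (iM _ _ AM CM)) (negbTE (iM _ _ BM CM)).
have le_M_perp : #|M| <= #|perp M|.
  apply/subset_leq_card/subsetP => A AM; rewrite inE.
  by apply/forall_inP => B BM; apply/(isotropicP _ isoM).
have := card_perp mulM M1; rewrite card_pauli => perpM.
have : #|M| * #|M| <= 2 ^ n * 2 ^ n by rewrite -perpM leq_mul2r le_M_perp orbT.
by have := maxM _ iS; move: (2 ^ n) => m; nia.
Qed.

Lemma max_class_commutant C X : max_commuting_class C ->
  {in C, forall V, pauli_commute X V} -> X \in I |: C.
Proof.
move=> [cardC C1 commC] XC; apply/negPn/negP; rewrite in_setU1 negb_or => /andP[X1 XnC].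
have isoC : isotropic C by apply/isotropicP => A B AC BC; rewrite -pauli_commuteE commC.
have iso1C : isotropic (I |: C) by apply: isotropicU1 => // A _; rewrite anticommute1l.
have : isotropic (X |: (I |: C)).
  by apply: isotropicU1 => // A /setU1P[->|/XC //]; rewrite anticommuteC anticommute1l.
move/card_isotropic; rewrite !cardsU1 in_setU1 (negbTE X1) (negbTE XnC) C1 cardC.
by have := expn_gt0 2 n; lia.
Qed.

Lemma max_class_mul_closed C : max_commuting_class C -> mul_closed (I |: C).
Proof.
move=> maxC; have [_ _ commC] := maxC.
move=> A B; have [-> _ _|AB] := eqVneq A B; first by rewrite pauli_mulxx setU11.
case/setU1P=> [->|AC]; first by rewrite pauli_mulC pauli_mul1.
case/setU1P=> [->|BC]; first by rewrite pauli_mul1 setU1r.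
apply: max_class_commutant => // V VC.
move: (commC _ _ AC VC) (commC _ _ BC VC).
by rewrite !pauli_commuteE anticommuteMl => /negbTE -> /negbTE ->.
Qed.

Lemma card_commuting_max_class C X : max_commuting_class C -> X \notin I |: C ->
  #|[set V in C | pauli_commute X V]| = (2 ^ n.-1 - 1)%N.
Proof.
move=> maxC XnC; have [cardC C1 _] := maxC.
have [A AC AX] : exists2 A, A \in C & anticommute A X.
  apply/exists_inP; apply: contraR XnC; rewrite negb_exists_in => /forall_inP XC.
  by apply: max_class_commutant => // V /XC; rewrite pauli_commuteE anticommuteC.
have := card_commuting_in_closed (max_class_mul_closed maxC) (setU1r I AC) AX.
have -> : [set B in I |: C | ~~ anticommute B X] =
          I |: [set V in C | pauli_commute X V].
  apply/setP => B; rewrite !inE pauli_commuteE (anticommuteC X).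
  by have [->|_] := eqVneq B I; rewrite ?eqxx ?anticommute1l.
rewrite !cardsU1 inE (negbTE C1) /= cardC.
have n_gt0 : 0 < n.
  have : 0 < #|C| by apply/card_gt0P; exists A.
  by rewrite cardC; case: (n).
have pow_n : 2 ^ n = 2 * 2 ^ n.-1 by rewrite -expnS prednK.
by rewrite pow_n; have := expn_gt0 2 n.-1; lia.
Qed.

End PauliGroup.

Theorem lemma3 (n : nat) (Ci Cj : {set pauli n}) :
  max_commuting_class Ci -> max_commuting_class Cj ->
  Ci :&: Cj = set0 ->
  (forall U, U \in Ci ->
     #|[set V in Cj | pauli_commute U V]| = (2 ^ n.-1 - 1)%N) /\
  {in Ci &, forall U U',
     [set V in Cj | pauli_commute U V] = [set V in Cj | pauli_commute U' V] ->
     U = U'}.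
Proof.
move=> maxCi maxCj disj; have [_ Ci1 _] := maxCi.
have outside_Cj X : X \in pauli_id n |: Ci -> X \in pauli_id n |: Cj -> X = pauli_id n.
  case/setU1P=> // XCi /setU1P[] // XCj.
  by move/setP/(_ X): disj; rewrite !inE XCi XCj.
split=> [U UCi | U U' UCi U'Ci sameV].
  apply: card_commuting_max_class => //; apply: contraNN Ci1 => UCj.
  by rewrite -(outside_Cj U (setU1r _ UCi) UCj).
apply/eqP; rewrite -pauli_mul_eq1; apply/eqP/outside_Cj.
  exact: max_class_mul_closed (setU1r _ UCi) (setU1r _ U'Ci).
apply: max_class_commutant => // V VCj.
move/setP/(_ V): sameV; rewrite !inE VCj !pauli_commuteE /= => sameV.
by rewrite anticommuteMl -[anticommute U V]negbK sameV negbK addbb.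
Qed.
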